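(* Let $X,Y$ be mm-spaces and $p\in[1,+\infty]$. Then for every $\kappa\in(0,1)$ and $\kappa'\in(0,1/2)$, $$\mathrm{OD}(X\times_p Y;-(\kappa+\kappa'))\le\mathrm{OD}(X;-\kappa)+2\,\mathrm{OD}(Y;-\kappa').$$
   Context: An mm-space is a triple $(X,d_X,m_X)$ with $(X,d_X)$ complete separable metric space and $m_X$ a Borel probability measure. For $p<\infty$, $F_p(s,t)=(s^p+t^p)^{1/p}$, $F_\infty(s,t)=\max\{s,t\}$; $X\times_pY:=(X\times Y,d_{F_p},m_X\otimes m_Y)$ with $d_{F_p}((x,y),(x',y'))=F_p(d_X(x,x'),d_Y(y,y'))$. Partial diameter: $\mathrm{PD}(X;\alpha)$ = infimum of $\operatorname{diam}A$ over Borel $A$ with $m_X(A)\ge\alpha$. Observable diameter: $\mathrm{OD}(X;-\kappa):=\sup_f\mathrm{PD}((\mathbb R,|\cdot|,f_*m_X);1-\kappa)$ over 1-Lipschitz $f\colon X\to\mathbb R$. *)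

From HB Require Import structures.
From mathcomp Require Import all_boot all_order all_algebra.
From mathcomp Require Import all_classical all_reals all_analysis.
Set Implicit Arguments. Unset Strict Implicit. Unset Printing Implicit Defensive.
Import Order.TTheory GRing.Theory Num.Theory.
Local Open Scope classical_set_scope.
Local Open Scope ring_scope.

Section MM.
Variable R : realType.

Definition is_metric (T : Type) (d : T -> T -> R) : Prop :=
  (forall x y, 0 <= d x y) /\
  (forall x y, d x y = 0 <-> x = y) /\
  (forall x y, d x y = d y x) /\
  (forall x y z, d x z <= d x y + d y z).

Definition metric_complete (T : Type) (d : T -> T -> R) : Prop :=
  forall u : nat -> T,
    (forall e : R, 0 < e -> exists N : nat, forall m n : nat,
        (N <= m)%N -> (N <= n)%N -> d (u m) (u n) < e) ->
    exists l : T, forall e : R, 0 < e -> exists N : nat, forall n : nat,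
        (N <= n)%N -> d (u n) l < e.

(* existence of a countable dense sequence (the spaces considered carry a
   probability measure, hence are nonempty) *)
Definition metric_separable (T : Type) (d : T -> T -> R) : Prop :=
  exists D : nat -> T, forall (x : T) (e : R), 0 < e -> exists n : nat, d x (D n) < e.

Definition metric_open (T : Type) (d : T -> T -> R) : set (set T) :=
  [set A | forall x, A x -> exists2 e : R, 0 < e & [set y | d x y < e] `<=` A].

Definition is_borel_for d0 (T : measurableType d0) (d : T -> T -> R) : Prop :=
  (@measurable d0 T) = <<s metric_open d >>.

Definition mm_space d0 (T : measurableType d0) (d : T -> T -> R)
    (m : probability T R) : Prop :=
  is_metric d /\ metric_complete d /\ metric_separable d /\ is_borel_for d.

(* diameter, with the convention diam set0 = 0 *)
Definition diam (T : Type) (d : T -> T -> R) (A : set T) : \bar R :=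
  ereal_sup ([set 0%E] `|` [set (d x y)%:E | x in A & y in A]).

Definition PD_R (nu : set R -> \bar R) (alpha : R) : \bar R :=
  ereal_inf [set diam (fun x y : R => `|x - y|) A |
             A in [set A : set R | measurable A /\ (alpha%:E <= nu A)%E]].

Definition lipschitz1 (T : Type) (d : T -> T -> R) (f : T -> R) : Prop :=
  forall x y, `|f x - f y| <= d x y.

Definition OD (T : Type) (d : T -> T -> R) (m : set T -> \bar R) (kappa : R)
  : \bar R :=
  ereal_sup [set PD_R (fun A => m (f @^-1` A)) (1 - kappa) |
             f in [set f : T -> R | lipschitz1 d f]].

Definition Fp (p : \bar R) (s t : R) : R :=
  match p with
  | EFin r => powR (powR s r + powR t r) r^-1
  | _ => Num.max s t
  end.

Definition dist_p (p : \bar R) (X Y : Type) (dX : X -> X -> R) (dY : Y -> Y -> R)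
  (u v : X * Y) : R := Fp p (dX u.1 v.1) (dY u.2 v.2).

End MM.

From HB Require Import structures.
From mathcomp Require Import all_boot all_order all_algebra.
From mathcomp Require Import all_classical all_reals all_analysis.
From mathcomp Require Import lra.
Import Order.TTheory GRing.Theory Num.Theory.
Set Implicit Arguments. Unset Strict Implicit. Unset Printing Implicit Defensive.
Local Open Scope classical_set_scope.
Local Open Scope ring_scope.

(* Let f be 1-Lipschitz on X x_p Y.  Each section f(x, .) is 1-Lipschitz on Y,
   so it takes values with probability >= 1 - kappa' > 1/2 in a set of diameter
   about OD(Y; -kappa'); such a set is within that distance of the largest
   median m(x) of f(x, .).  Comparing sections pointwise shows that m is
   1-Lipschitz on X, so with probability >= 1 - kappa it takes values in a set A
   of diameter about OD(X; -kappa).  Integrating over x in m^-1(A), f lands in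
   the OD(Y; -kappa')-neighbourhood of the convex hull of A with probability
   >= (1 - kappa) (1 - kappa') >= 1 - kappa - kappa'. *)

Section Reals.
Context {R : realType}.

Lemma Fps0 (p : \bar R) (s : R) : (1%:E <= p)%E -> 0 <= s -> Fp p s 0 = s.
Proof.
case: p => [r| |] //= r1 s0; last by rewrite max_l.
have r0 : r != 0 by rewrite gt_eqF // (lt_le_trans ltr01) -?lee_fin.
by rewrite powR0 // addr0 -powRrM mulfV // powRr1.
Qed.

Lemma Fp0s (p : \bar R) (s : R) : (1%:E <= p)%E -> 0 <= s -> Fp p 0 s = s.
Proof.
case: p => [r| |] //= r1 s0; last by rewrite max_r.
have r0 : r != 0 by rewrite gt_eqF // (lt_le_trans ltr01) -?lee_fin.
by rewrite powR0 // add0r -powRrM mulfV // powRr1.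
Qed.

Lemma dist_le_diam (T : Type) (d : T -> T -> R) (A : set T) u v :
  A u -> A v -> ((d u v)%:E <= diam d A)%E.
Proof. by move=> Au Av; apply: ereal_sup_ubound; right; exists u => //; exists v. Qed.

Lemma diam_ge0 (T : Type) (d : T -> T -> R) (A : set T) : (0 <= diam d A)%E.
Proof. by apply: ereal_sup_ubound; left. Qed.

Lemma diam_le (T : Type) (d : T -> T -> R) (A : set T) (M : R) :
  0 <= M -> (forall u v, A u -> A v -> d u v <= M) -> (diam d A <= M%:E)%E.
Proof.
move=> M0 hM; apply: ge_ereal_sup => _ [-> //|[u Au [v Av <-]]].
by rewrite lee_fin; apply: hM.
Qed.

Lemma PD_R_ge0 (nu : set R -> \bar R) alpha : (0 <= PD_R nu alpha)%E.
Proof. by apply: le_ereal_inf_tmp => _ [A _ <-]; apply: diam_ge0. Qed.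

Lemma le_PD_R (nu : set R -> \bar R) alpha beta :
  alpha <= beta -> (PD_R nu alpha <= PD_R nu beta)%E.
Proof.
move=> ab; apply: ereal_inf_le_tmp => _ [A [mA hA] <-]; exists A => //; split => //.
by apply: le_trans hA; rewrite lee_fin.
Qed.

Lemma OD_ge0 (T : Type) (d : T -> T -> R) (m : set T -> \bar R) kappa :
  (forall x y, 0 <= d x y) -> (0 <= OD d m kappa)%E.
Proof.
move=> d0; apply: le_trans (PD_R_ge0 (fun A => m (cst 0 @^-1` A)) (1 - kappa)) _.
by apply: ereal_sup_ubound; exists (cst 0) => //= x y; rewrite subrr normr0.
Qed.

Lemma OD_le_small_set (T : Type) (d : T -> T -> R) (m : set T -> \bar R)
    kappa a eps f :
  (OD d m kappa <= a%:E)%E -> 0 < eps -> lipschitz1 d f ->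
  exists2 A : set R, measurable A /\ ((1 - kappa)%:E <= m (f @^-1` A))%E &
    forall u v, A u -> A v -> `|u - v| <= a + eps.
Proof.
move=> hOD eps0 hf.
have hPD : (PD_R (fun A => m (f @^-1` A)) (1 - kappa) < (a + eps)%:E)%E.
  apply: le_lt_trans (_ : a%:E < _)%E; last by rewrite lte_fin ltrDl.
  by apply: le_trans hOD; apply: ereal_sup_ubound; exists f.
have [_ [A hA <-] hlt] := ereal_inf_lt hPD.
exists A => // u v Au Av; rewrite -lee_fin.
exact: le_trans (dist_le_diam _ Au Av) (ltW hlt).
Qed.

Lemma sup_sub_inf_le (A : set R) (D : R) x0 :
  A x0 -> (forall u v, A u -> A v -> `|u - v| <= D) ->
  (forall u, A u -> inf A <= u <= sup A) /\ sup A - inf A <= D.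
Proof.
move=> Ax0 hD.
have Aub : has_ubound A.
  exists (x0 + D) => u Au; move: (hD u x0 Au Ax0); rewrite ler_norml; lra.
have Alb : has_lbound A.
  exists (x0 - D) => u Au; move: (hD u x0 Au Ax0); rewrite ler_norml; lra.
split=> [u Au|]; first by rewrite ge_inf ?ub_le_sup.
suff : sup A - D <= inf A by lra.
apply: lb_le_inf; first by exists x0.
move=> v Av; rewrite lerBlDr; apply: ge_sup; first by exists x0.
by move=> u Au; move: (hD u v Au Av); rewrite ler_norml; lra.
Qed.

Lemma diam_itv (a b : R) :
  a <= b -> (diam (fun u v : R => `|u - v|%R) `[a, b]%classic <= (b - a)%:E)%E.
Proof.
move=> ab; apply: diam_le; first by rewrite subr_ge0.
move=> u v; rewrite /= !in_itv /= => /andP[? ?] /andP[? ?].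
rewrite ler_norml; apply/andP; split; lra.
Qed.

Lemma measure_gt0_nonempty d (T : measurableType d)
    (mu : {measure set T -> \bar R}) (S : set T) :
  (0 < mu S)%E -> exists x, S x.
Proof.
move=> mS; apply/set0P; apply: contraTneq mS => ->.
by rewrite measure0 ltxx.
Qed.

Lemma lipschitz1_measurable d (T : measurableType d) (dT : T -> T -> R)
    (f : T -> R) :
  is_borel_for dT -> lipschitz1 dT f -> measurable_fun setT f.
Proof.
move=> hb hf.
apply: (measurability _ (measurable_realfun.RGenOInfty.measurableE R)).
move=> _ [_ [x ->] <-]; rewrite setTI /is_borel_for in hb *; rewrite hb.
apply: sub_sigma_algebra => y /=; rewrite in_itv /= andbT => xy.
exists (f y - x); first by rewrite subr_gt0.
move=> z /= dz; rewrite in_itv /= andbT.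
by move: (hf y z); rewrite ler_norml => /andP[_ h]; lra.
Qed.

Section Median.
Context d (T : measurableType d) (P : probability T R).

Definition median_set (g : T -> R) :=
  [set t : R | ((2^-1)%:E <= P [set y | (t <= g y)%R])%E].

Definition median (g : T -> R) := sup (median_set g).

Lemma measurable_le_fun (g : T -> R) t :
  measurable_fun setT g -> measurable [set y | t <= g y].
Proof.
move=> mg; have -> : [set y | t <= g y] = g @^-1` `[t, +oo[.
  by apply/seteqP; split => y /=; rewrite in_itv /= andbT.
by rewrite -[_ @^-1` _]setTI; apply: mg => //; exact: measurable_itv.
Qed.

Section Concentrated.
Variables (g : T -> R) (J : set R) (k D : R).
Hypotheses (mg : measurable_fun setT g) (mJ : measurable J)
  (hJ : (k%:E <= P (g @^-1` J))%E)
  (hD : forall u v, J u -> J v -> `|u - v| <= D).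

Let mgJ : measurable (g @^-1` J).
Proof. by rewrite -[_ @^-1` _]setTI; exact: mg. Qed.

Lemma median_set_ub y : 2^-1 < k -> J (g y) -> ubound (median_set g) (g y + D).
Proof.
move=> k_gt Jy t Pt; rewrite leNgt; apply/negP => lt_t.
have sub : [set y' | t <= g y'] `<=` ~` (g @^-1` J).
  by move=> y' /= ht Jy'; move: (hD Jy' Jy); rewrite ler_norml; lra.
have hC : (P [set y' | (t <= g y')%R] <= P (~` (g @^-1` J)))%E.
  by apply: le_measure sub; rewrite inE; [exact: measurable_le_fun|exact: measurableC].
move: (le_trans Pt hC); rewrite probability_setC //.
by move=> /le_trans /(_ (leeB (lexx _) hJ)); rewrite -EFinB lee_fin; lra.
Qed.

Lemma median_set_lb y : 2^-1 <= k -> J (g y) -> median_set g (g y - D).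
Proof.
move=> k_ge Jy; apply: le_trans (le_trans _ hJ) _; first by rewrite lee_fin.
apply: le_measure; rewrite ?inE //; first exact: measurable_le_fun.
by move=> y' /= Jy'; move: (hD Jy' Jy); rewrite ler_norml; lra.
Qed.

Lemma median_near y :
  2^-1 < k -> J (g y) -> has_sup (median_set g) /\ `|g y - median g| <= D.
Proof.
move=> k_gt Jy.
have ub := median_set_ub k_gt Jy.
have lb := median_set_lb (ltW k_gt) Jy.
have hs : has_sup (median_set g) by split; [exists (g y - D)|exists (g y + D)].
split=> //; rewrite ler_norml.
have : median g <= g y + D by apply: ge_sup => //; exists (g y - D).
have : g y - D <= median g by apply: ub_le_sup => //; case: hs.
lra.
Qed.

End Concentrated.

Lemma median_le_shift (g h : T -> R) c :
  measurable_fun setT g -> measurable_fun setT h ->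
  (forall y, g y <= h y + c) ->
  has_sup (median_set g) -> has_sup (median_set h) -> median g <= median h + c.
Proof.
move=> mg mh hgh [gne _] hs; apply: ge_sup => // t Pt.
suff : t - c <= median h by lra.
apply: ub_le_sup; first by case: hs.
apply: le_trans Pt _; apply: le_measure; rewrite ?inE; try exact: measurable_le_fun.
by move=> y /= ty; move: (hgh y); lra.
Qed.

End Median.

(* No measurability hypotheses: [x |-> nu (xsection S x)] in
   [product_measure1_ge] need not be measurable. *)
Lemma ge0_le_integralT d (T : measurableType d) (mu : {measure set T -> \bar R})
    (f g : T -> \bar R) :
  (forall x, 0 <= f x)%E -> (forall x, f x <= g x)%E ->
  (\int[mu]_x f x <= \int[mu]_x g x)%E.
Proof.
move=> f0 fg; have g0 x : (0 <= g x)%E by exact: le_trans (fg x).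
rewrite !ge0_integralTE //; apply: ereal_sup_le => _ [h hf <-].
by exists h => // x; apply: le_trans (fg x).
Qed.

Lemma product_measure1_ge d1 d2 (X : measurableType d1) (Y : measurableType d2)
    (mu : {measure set X -> \bar R}) (nu : {measure set Y -> \bar R})
    (S : set (X * Y)) (E : set X) (k : R) :
  measurable E -> 0 <= k -> (forall x, E x -> (k%:E <= nu (xsection S x))%E) ->
  (k%:E * mu E <= (mu \x nu) S)%E.
Proof.
move=> mE k0 hk.
have <- : (\int[mu]_x (k * \1_E x)%:E = k%:E * mu E)%E.
  rewrite (integralZl_indic measurableT (fun=> E)) ?ltNge ?k0 //=.
  by rewrite integral_indic // setIT.
apply: ge0_le_integralT => x; first by rewrite lee_fin mulr_ge0.
rewrite indicE; case: (boolP (x \in E)) => [/[!inE] Ex|_].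
  by rewrite mulr1; exact: hk.
by rewrite mulr0 measure_ge0.
Qed.

End Reals.

Section ProductConcentration.
Context {R : realType} d1 d2 (X : measurableType d1) (Y : measurableType d2)
  (dX : X -> X -> R) (dY : Y -> Y -> R)
  (mX : probability X R) (mY : probability Y R).
Hypotheses (hX : mm_space dX mX) (hY : mm_space dY mY).
Variables (p : \bar R) (f : X * Y -> R).
Hypotheses (hp : (1%:E <= p)%E) (hf : lipschitz1 (dist_p p dX dY) f).

Let fx x y := f (x, y).

Lemma lipschitz1_section x : lipschitz1 dY (fx x).
Proof.
case: hX => -[_ [dXeq _]] _ y y'; move: (hf (x, y) (x, y')).
by rewrite /dist_p /= (proj2 (dXeq x x) erefl) Fp0s //; case: hY => -[].
Qed.

Lemma measurable_section x : measurable_fun setT (fx x).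
Proof.
by apply: lipschitz1_measurable (lipschitz1_section x); case: hY => _ [_ []].
Qed.

Lemma measurable_section_preimage x (A : set R) :
  measurable A -> measurable (fx x @^-1` A).
Proof. by move=> mA; rewrite -[_ @^-1` _]setTI; exact: measurable_section. Qed.

Variables (b kappa' : R).
Hypotheses (hb : (OD dY mY kappa' <= b%:E)%E) (hk' : kappa' < 2^-1).

Let mf x := median mY (fx x).

Lemma section_near_median x eps : 0 < eps ->
  exists2 J : set R, measurable J /\ ((1 - kappa')%:E <= mY (fx x @^-1` J))%E &
    has_sup (median_set mY (fx x)) /\
    forall y, J (fx x y) -> `|fx x y - mf x| <= b + eps.
Proof.
move=> eps0; have [J [mJ hJ] hD] := OD_le_small_set hb eps0 (lipschitz1_section x).
have half_lt : 2^-1 < 1 - kappa' by move: hk'; lra.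
have near y := median_near (y := y) (measurable_section x) mJ hJ hD half_lt.
exists J => //; split=> [|y /near []//].
have /measure_gt0_nonempty [y Jy] : (0 < mY (fx x @^-1` J))%E.
  by apply: lt_le_trans hJ; rewrite lte_fin; lra.
by case: (near y Jy).
Qed.

Lemma median_section_concentrated x eps : 0 < eps ->
  ((1 - kappa')%:E <=
     mY (fx x @^-1` `[(mf x - (b + eps))%R, (mf x + (b + eps))%R]))%E.
Proof.
move=> eps0; have [J [mJ hJ] [_ near]] := section_near_median x eps0.
apply: le_trans hJ _; apply: le_measure; rewrite ?inE;
  [exact: measurable_section_preimage |
   exact: measurable_section_preimage (measurable_itv _) |].
move=> y /near; rewrite /= in_itv /= ler_norml.
by move=> /andP[? ?]; apply/andP; split; lra.
Qed.

Lemma lipschitz1_median_section : lipschitz1 dX mf.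
Proof.
case: hX => -[dX0 [_ [dXsym _]]] _; case: hY => -[_ [dYeq _]] _.
have hs x : has_sup (median_set mY (fx x)).
  by case: (section_near_median x ltr01) => ? _ [].
have half x x' : mf x <= mf x' + dX x x'.
  apply: median_le_shift; rewrite ?hs //; try exact: measurable_section.
  move=> y; move: (hf (x, y) (x', y)); rewrite /fx.
  by rewrite /dist_p /= (proj2 (dYeq y y) erefl) Fps0 ?dX0 // ler_norml; lra.
by move=> x x'; move: (half x x') (half x' x); rewrite ler_norml dXsym; lra.
Qed.

Variables (a kappa : R).
Hypotheses (ha : (OD dX mX kappa <= a%:E)%E) (hk : kappa < 1).

Lemma PD_product_le eps : 0 < eps ->
  (PD_R (fun S => (mX \x mY) (f @^-1` S)) ((1 - kappa) * (1 - kappa'))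
     <= (a + 2 * b + 3 * eps)%:E)%E.
Proof.
move=> eps0.
have [A [mA hA] hAw] := OD_le_small_set ha eps0 lipschitz1_median_section.
have mE : measurable (mf @^-1` A).
  have bX : is_borel_for dX by case: hX => _ [_ []].
  have := lipschitz1_measurable bX lipschitz1_median_section.
  by move=> /(_ measurableT _ mA); rewrite setTI.
have [x0 Ax0] : exists x0, A (mf x0).
  apply: measure_gt0_nonempty (lt_le_trans _ hA).
  by rewrite lte_fin; move: hk; lra.
have [Ahull Awidth] := sup_sub_inf_le Ax0 hAw.
pose c := b + eps.
pose B := `[inf A - c, sup A + c]%classic.
have hsection x : (mf @^-1` A) x ->
    ((1 - kappa')%:E <= mY (xsection (f @^-1` B) x))%E.
  move=> Ex; have -> : xsection (f @^-1` B) x = fx x @^-1` B.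
    by apply/seteqP; split => y; rewrite /xsection /= inE.
  apply: le_trans (median_section_concentrated x eps0) _.
  apply: le_measure; rewrite ?inE;
    try exact: measurable_section_preimage (measurable_itv _).
  move: (Ahull _ Ex) => /andP[lo hi] y; rewrite /= !in_itv /= => /andP[? ?].
  by rewrite /B /= in_itv /=; apply/andP; split; rewrite /c; lra.
apply: (@le_trans _ _ (diam (fun u v : R => `|u - v|%R) B)).
  apply: ereal_inf_lbound; exists B => //; split; first exact: measurable_itv.
  rewrite mulrC EFinM; apply: le_trans (product_measure1_ge _ mE _ hsection).
    by apply: lee_wpmul2l hA; rewrite lee_fin; move: hk'; lra.
  by move: hk'; lra.
have b0 : 0 <= b.
  by rewrite -lee_fin; apply: le_trans hb; apply: OD_ge0; case: hY => -[].
apply: le_trans (diam_itv _) _; first by move: (Ahull _ Ax0) => /andP[]; rewrite /c; lra.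
by rewrite lee_fin /c; move: Awidth; lra.
Qed.

End ProductConcentration.

Theorem mainTheorem8 (R : realType) (d1 d2 : measure_display)
  (X : measurableType d1) (Y : measurableType d2)
  (dX : X -> X -> R) (dY : Y -> Y -> R)
  (mX : probability X R) (mY : probability Y R)
  (hX : mm_space dX mX) (hY : mm_space dY mY)
  (p : \bar R) (hp : (1%:E <= p)%E)
  (kappa kappa' : R)
  (hk : 0 < kappa < 1) (hk' : 0 < kappa' < 2^-1) :
  (OD (dist_p p dX dY) (mX \x mY)%E (kappa + kappa')
     <= adde (OD dX mX kappa) (mule 2%:E (OD dY mY kappa')))%E.
Proof.
have [[dX0 _] _] := hX; have [[dY0 _] _] := hY.
move: hk hk' => /andP[k0 k1] /andP[k'0 k'1].
have addeE (x y : \bar R) : adde x y = (x + y)%E by [].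
rewrite addeE.
case Ha: (OD dX mX kappa) (OD_ge0 mX kappa dX0) => [a| |] // _; last first.
  by rewrite addye ?leey // gt_eqF // (lt_le_trans ltNy0) // mule_ge0 // OD_ge0.
case Hb: (OD dY mY kappa') (OD_ge0 mY kappa' dY0) => [b| |] // _; last first.
  by rewrite muleC gt0_mulye ?lte_fin // addey ?leey.
rewrite -EFinM -EFinD; apply/lee_addgt0Pr => e e0.
apply: ge_ereal_sup => _ [f hf <-].
have ha : (OD dX mX kappa <= a%:E)%E by rewrite Ha.
have hb : (OD dY mY kappa' <= b%:E)%E by rewrite Hb.
have e3 : 0 < e / 3 by rewrite divr_gt0.
apply: le_trans (le_PD_R _ _) (le_trans (PD_product_le hX hY hp hf hb k'1 ha k1 e3) _).
  by rewrite mulrBr !mulr1 mulrBl mul1r; nra.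
by rewrite -EFinD lee_fin (mulrC 3) divfK ?pnatr_eq0.
Qed.
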